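(* Let $\{\xi_j\}$ be an orthonormal basis of internal states and let $$|\psi\rangle=\hat a_0^\dagger[\xi_{i_0}]\cdots\hat a_{n-1}^\dagger[\xi_{i_{n-1}}]|\vec0\rangle$$ be an input state of $n$ photons in $n$ modes (one per mode) such that for some $r$, $\langle\xi_{i_r}|\xi_{i_j}\rangle=0$ for all $j\ne r$. Then the probability that the $n$-mode Fourier interferometer $F_n$ applied to $|\psi\rangle$, followed by photon-number-resolving detection on all $n$ output modes (insensitive to internal states), yields a valid pattern is exactly $1/n$.
   Context: $\hat a_i^\dagger[\xi]$ creates a photon in external mode $i\in\{0,\dots,n-1\}$ with internal state $\xi$. The Fourier interferometer acts on external modes only: $\hat a_r^\dagger[\xi]\mapsto\frac1{\sqrt n}\sum_{j=0}^{n-1}\omega^{-rj}\hat a_j^\dagger[\xi]$ with $\omega=e^{2\pi i/n}$. A measured occupation pattern $(s_0,\dots,s_{n-1})$ ($s_i$ = number of photons in mode $i$) is valid if $\sum_{i=0}^{n-1}i\,s_i\equiv0\pmod n$. *)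

From HB Require Import structures.
From mathcomp Require Import all_boot all_order all_algebra.
From mathcomp Require Import complex.
From mathcomp Require Import reals trigo.
Set Implicit Arguments. Unset Strict Implicit. Unset Printing Implicit Defensive.
Import Order.TTheory GRing.Theory Num.Theory.
Local Open Scope ring_scope.
Local Open Scope complex_scope.

Definition omega (R : realType) (n : nat) : R[i] :=
  (cos (2 * pi / n%:R)) +i* (sin (2 * pi / n%:R)).

(* Fourier interferometer: a_r^dag |-> sum_j U j r a_j^dag,
   U j r = omega^{-rj} / sqrt n. *)
Definition fourierU (R : realType) (n : nat) (j r : 'I_n) : R[i] :=
  ((Num.sqrt (n%:R : R))^-1)%:C * (omega R n) ^- (r * j).

(* Orthonormal basis of internal states indexed by K: <xi_a|xi_b> = delta_ab *)
Definition basis_ip (R : realType) (K : finType) (a b : K) : R[i] :=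
  (a == b)%:R.

(* Occupation numbers (output mode l, internal label k) produced when the photon
   of input mode j goes to output mode f j (it keeps its internal label i j). *)
Definition occ (n : nat) (K : finType) (i : 'I_n -> K) (f : 'I_n -> 'I_n)
  (lk : 'I_n * K) : nat :=
  #|[set j : 'I_n | (f j == lk.1) && (i j == lk.2)]|.

(* Output state:  prod_j (sum_l U l j a_{l, i j}^dag) |0>
   = sum_m coef m * prod_{l,k} (a_{l,k}^dag)^{m(l,k)} |0>,
   with coef m = sum_{f : occ f = m} prod_j U (f j) j.
   Fock basis states m are occupation functions (each entry <= n). *)
Definition out_coef (C : nzRingType) (n : nat) (K : finType)
  (U : 'I_n -> 'I_n -> C) (i : 'I_n -> K) (m : {ffun 'I_n * K -> 'I_n.+1}) : C :=
  \sum_(f : {ffun 'I_n -> 'I_n} | [forall lk, occ i f lk == m lk :> nat])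
     \prod_(j < n) U (f j) j.

(* Probability of the Fock state m: |coef m|^2 * prod m(l,k)!  (since
   || prod (a^dag)^m |0> ||^2 = prod m!). *)
Definition fock_prob (R : realType) (n : nat) (K : finType)
  (U : 'I_n -> 'I_n -> R[i]) (i : 'I_n -> K) (m : {ffun 'I_n * K -> 'I_n.+1}) : R[i] :=
  `|out_coef U i m| ^+ 2 * (\prod_(lk : 'I_n * K) (nat_of_ord (m lk))`!)%:R.

Definition pattern (n : nat) (K : finType) (m : {ffun 'I_n * K -> 'I_n.+1})
  (l : 'I_n) : nat := \sum_(k : K) nat_of_ord (m (l, k)).

Definition valid_pattern (n : nat) (s : 'I_n -> nat) : bool :=
  ((\sum_(l < n) l * s l) %% n == 0)%N.

Definition prob_valid (R : realType) (n : nat) (K : finType)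
  (U : 'I_n -> 'I_n -> R[i]) (i : 'I_n -> K) : R[i] :=
  \sum_(m : {ffun 'I_n * K -> 'I_n.+1} | valid_pattern (pattern m)) fock_prob U i m.

Arguments fourierU R n : clear implicits.
Arguments basis_ip R K : clear implicits.

(* The probability of an occupation [m] is |sum_(f |-> m) A f|^2 * prod m!,
   where [f] sends input photon [j] to output mode [f j] and
   [A f = prod_j U (f j) j]. The factor [prod m!] counts the label-preserving
   permutations [s] with [f \o s = g] for each [g] of the same occupation as
   [f], so the probability of a valid pattern is
   [sum_(f valid) sum_s A f * (A (f \o s))^*]. Writing the validity condition
   [n %| sum_j f j] as [n^-1 * sum_t omega^(t * sum_j f j)], the sum over [f]
   factorises over the photons [j] into Fourier sums over the output modes,
   each equal to the indicator of [t + s^-1 j = j (mod n)]. Thus [s^-1] is a label-preserving rotation by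
   [-t]; it fixes the uniquely labelled photon [r], so [t = 0] and [s = 1],
   and only the term [1/n] survives. *)

From HB Require Import structures.
From mathcomp Require Import all_boot all_order all_algebra all_fingroup.
From mathcomp Require Import complex.
From mathcomp Require Import reals trigo.
From mathcomp Require Import ring lra.
Import Order.TTheory GRing.Theory Num.Theory.
Set Implicit Arguments. Unset Strict Implicit. Unset Printing Implicit Defensive.

Section Rearrangements.
Variables (T D : finType).
Implicit Types (A : {set T}) (phi psi : T -> D) (s : {perm T}).
Local Open Scope group_scope.

Definition fiber_size A phi d : nat := #|[set x in A | phi x == d]|.

Definition rearrangements A phi psi : {set {perm T}} :=
  [set s | perm_on A s && [forall x in A, phi (s x) == psi x]].

Lemma fiber_size_tperm A phi a c d : a \in A -> c \in A ->
  fiber_size (A :\ a) (phi \o tperm c a) d = fiber_size A phi d - (phi c == d).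
Proof.
move=> aA cA; rewrite /fiber_size.
have -> : [set x in A :\ a | (phi \o tperm c a) x == d] =
          tperm c a @^-1: ([set x in A | phi x == d] :\ c).
  apply/setP => x; rewrite !inE /=.
  case: tpermP => [->|->|/eqP xc /eqP xa]; last by rewrite xa xc.
    by rewrite cA aA /= andbT [a == c]eq_sym.
  by rewrite !eqxx.
rewrite card_preimset; last exact: perm_inj.
by rewrite (cardsD1 c [set x in A | _]) inE cA addKn.
Qed.

Lemma fiber_sizeD1 A phi a d : a \in A ->
  fiber_size (A :\ a) phi d = fiber_size A phi d - (phi a == d).
Proof.
move=> aA; rewrite -(fiber_size_tperm _ _ aA aA) tperm1.
by apply: eq_card => x; rewrite !inE /= perm1.
Qed.

Lemma fiber_size_set0 phi d : fiber_size set0 phi d = 0.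
Proof. by apply: eq_card0 => x; rewrite !inE. Qed.

Lemma rearrangements_set0 phi psi : rearrangements set0 phi psi = [set 1].
Proof.
apply/setP => s; rewrite !inE; apply/andP/eqP => [[s0 _] | ->].
  by apply: perm_on_id s0 _; rewrite cards0.
by split; [apply: perm_on1 | apply/forall_inP => x; rewrite inE].
Qed.

Lemma perm_onD1_mul_tperm A s a c : a \in A -> c \in A ->
  perm_on A s && (s a == c) = perm_on (A :\ a) (s * tperm c a).
Proof.
move=> aA cA; apply/idP/idP => [/andP[sA /eqP sa]|].
  apply/subsetP => x; rewrite inE permM !inE.
  have [-> | xa] := eqVneq x a; first by rewrite sa tpermL eqxx.
  apply: contraR => xA; have xc : c != x by apply: contraNneq xA => <-.
  by rewrite (out_perm sA xA) tpermD // eq_sym.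
move=> sA'; have sE : s = s * tperm c a * tperm c a by rewrite -mulgA tperm2 mulg1.
have sa : s a = c by rewrite sE permM (out_perm sA') ?tpermR // !inE eqxx.
rewrite sa eqxx andbT; apply/subsetP => x; rewrite inE; apply: contraR => xA.
have [xa xc] : a != x /\ c != x by split; apply: contraNneq xA => <-.
by rewrite sE permM (out_perm sA') ?inE ?(negbTE xA) ?andbF // tpermD.
Qed.

(* Split according to the image [c] of a fixed [a \in A]; [s * tperm c a]
   then fixes [a]. *)
Lemma card_rearrangementsD1 A phi psi a : a \in A ->
  #|rearrangements A phi psi| =
  \sum_(c in A | phi c == psi a)
     #|rearrangements (A :\ a) (phi \o tperm c a) psi|.
Proof.
move=> aA; rewrite -sum1_card (partition_big (fun s => s a)
  (fun c => (c \in A) && (phi c == psi a))) /=; last first.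
  by move=> s; rewrite inE => /andP[sA /forall_inP phis]; rewrite perm_closed // aA phis.
apply: eq_bigr => c /andP[cA /eqP phic].
have mul_inj : injective (fun s => s * tperm c a) by apply: mulIg.
rewrite -(card_preimset _ mul_inj) -sum1_card; apply: eq_bigl => s.
rewrite !inE -andbA [_ && (s a == c)]andbC andbA perm_onD1_mul_tperm //.
apply: andb_id2l => sA'.
have /andP[_ /eqP sa] : perm_on A s && (s a == c) by rewrite perm_onD1_mul_tperm.
apply/forall_inP/forall_inP => phis x.
  by rewrite !inE /= permM tpermK => /andP[_]; apply: phis.
move=> xA; have [-> | xa] := eqVneq x a; first by rewrite sa phic.
by have := phis x; rewrite !inE xa xA /= permM tpermK; apply.
Qed.

Theorem card_rearrangements A phi psi :
  #|rearrangements A phi psi| =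
  if [forall d, fiber_size A phi d == fiber_size A psi d]
  then (\prod_d (fiber_size A phi d)`!)%N else 0.
Proof.
elim: {A}_.+1 {-2}A (ltnSn #|A|) phi => // m IH A; rewrite ltnS => Am phi.
have [-> | [a aA]] := set_0Vmem A.
  rewrite rearrangements_set0 cards1 (introT forallP) => [|d]; last first.
    by rewrite !fiber_size_set0.
  by rewrite big1 // => d _; rewrite fiber_size_set0.
set d0 := psi a.
pose fib' d := fiber_size A phi d - (d0 == d).
pose X := if [forall d, fib' d == fiber_size A psi d - (d0 == d)]
          then (\prod_d (fib' d)`!)%N else 0.
have Am' : #|A :\ a| < m by move: Am; rewrite (cardsD1 a) aA.
rewrite (card_rearrangementsD1 _ _ aA) (eq_bigr (fun _ => X)) => [|c /andP[cA /eqP phic]];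
  last first.
  rewrite IH // /X /fib'; under eq_forallb => d do
    rewrite fiber_size_tperm // fiber_sizeD1 // phic.
  by under eq_bigr => d _ do rewrite fiber_size_tperm // phic.
rewrite sum_nat_const (_ : #|_| = fiber_size A phi d0); last first.
  by apply: eq_card => x; rewrite !inE.
have psi_d0 : 0 < fiber_size A psi d0 by apply/card_gt0P; exists a; rewrite !inE aA eqxx.
case fib_d0 : (fiber_size A phi d0) => [|k].
  case: forallP => [/(_ d0)/eqP | _]; last by rewrite mul0n.
  by rewrite fib_d0 => fib_eq; rewrite -fib_eq in psi_d0.
rewrite /X; have -> : [forall d, fib' d == fiber_size A psi d - (d0 == d)] =
          [forall d, fiber_size A phi d == fiber_size A psi d].
  apply: eq_forallb => d; rewrite /fib'.
  have [<- | _] := eqVneq d0 d; last by rewrite !subn0.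
  by rewrite fib_d0 -(eqn_add2r 1) !subnK.
case: forallP => _; last by rewrite muln0.
rewrite [RHS](bigD1 d0) // [in LHS](bigD1 d0) //= /fib' fib_d0 eqxx subn1 mulnA -factS.
by congr (_ * _)%N; apply: eq_bigr => d /negbTE; rewrite eq_sym => ->; rewrite subn0.
Qed.

End Rearrangements.

Local Open Scope ring_scope.

Section RootsOfUnity.
Variable F : fieldType.

Lemma sum_expr_unity (x : F) n : x ^+ n = 1 ->
  \sum_(l < n) x ^+ l = if x == 1 then n%:R else 0.
Proof.
move=> xn1; have [-> | x_neq1] := eqVneq x 1.
  by rewrite (eq_bigr (fun _ => 1)) ?sumr_const ?card_ord // => l _; rewrite expr1n.
apply/eqP; move: (subrr (1 : F)); rewrite -{1}xn1 subrX1 => /eqP.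
by rewrite mulf_eq0 subr_eq0 (negbTE x_neq1).
Qed.

Lemma sum_mod_eq0_prim_root (I : finType) (w : I -> nat) (G : I -> F) z n :
  n.-primitive_root z -> n%:R != 0 :> F ->
  \sum_(a | (w a %% n == 0)%N) G a =
  n%:R^-1 * \sum_(t < n) \sum_a (z ^+ w a) ^+ t * G a.
Proof.
move=> z_prim n_neq0; rewrite exchange_big mulr_sumr big_mkcond.
apply: eq_bigr => a _.
rewrite -mulr_suml sum_expr_unity; last first.
  by rewrite -exprM mulnC exprM (prim_expr_order z_prim) expr1n.
have -> : (z ^+ w a == 1) = (w a %% n == 0)%N.
  by rewrite -(expr0 z) (eq_prim_root_expr z_prim) mod0n.
by case: ifP => _; rewrite ?mulKf // !mul0r mulr0.
Qed.

End RootsOfUnity.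

Section Omega.
Variable R : realType.

Lemma omega_expr n k : omega R n ^+ k =
  (cos (k%:R * (2 * pi / n%:R)) +i* sin (k%:R * (2 * pi / n%:R)))%C.
Proof.
rewrite /omega; set th := 2 * pi / n%:R.
elim: k => [|k IH]; first by rewrite expr0 !mul0r cos0 sin0.
rewrite exprS IH -[k.+1]addn1 natrD mulrDl mul1r cosD sinD /=.
by congr (_ +i* _)%C; ring.
Qed.

Lemma omega_prim n : (0 < n)%N -> n.-primitive_root (omega R n).
Proof.
move=> n_gt0; have nR_gt0 : 0 < n%:R :> R by rewrite ltr0n.
apply/andP; split => //; apply/forallP => k; rewrite unity_rootE.
have [-> | k_neq] := eqVneq k.+1 n.
  rewrite omega_expr mulrCA (divff (lt0r_neq0 nR_gt0)) mulr1 mulr_natl.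
  by rewrite cos2pi sin2pi !eqxx.
rewrite eqbF_neg; apply/eqP; rewrite omega_expr => -[cos_eq1 _].
pose x : R := k.+1%:R * pi / n%:R.
have x_gt0 : 0 < x by rewrite divr_gt0 // mulr_gt0 ?ltr0n ?pi_gt0.
have x_lt_pi : x < pi.
  rewrite ltr_pdivrMr // mulrC ltr_pM2l ?pi_gt0 // ltr_nat ltn_neqAle k_neq.
  exact: ltn_ord k.
have sin_x_gt0 : 0 < sin x by apply: sin_gt0_pi; rewrite x_gt0 x_lt_pi.
have angle_x2 : k.+1%:R * (2 * pi / n%:R) = x *+ 2 by rewrite /x -mulr_natr; ring.
move: cos_eq1; rewrite angle_x2 cos_mulr2n cos2sin2 => ?; nra.
Qed.

Lemma conjC_omega n : (omega R n)^* = (omega R n)^-1.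
Proof.
by rewrite invC_norm -add_Re2_Im2 /= cos2Dsin2 invr1 mul1r.
Qed.

End Omega.

Section PhotonPaths.
Variables (R : realType) (n : nat) (K : finType) (i : 'I_n -> K).
Implicit Types (U : 'I_n -> 'I_n -> R[i]) (f g : {ffun 'I_n -> 'I_n}).
Implicit Types (m : {ffun 'I_n * K -> 'I_n.+1}) (s : {perm 'I_n}).

Definition amplitude U (f : 'I_n -> 'I_n) : R[i] := \prod_(j < n) U (f j) j.

Definition occupation f : {ffun 'I_n * K -> 'I_n.+1} :=
  [ffun lk => inord (occ i f lk)].

Definition label_preserving : pred {perm 'I_n} :=
  [pred s : {perm 'I_n} | [forall j, i (s j) == i j]].

Definition comp_perm f s : {ffun 'I_n -> 'I_n} := [ffun j => f (s j)].

Lemma occupationE f lk : occupation f lk = occ i f lk :> nat.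
Proof.
by rewrite ffunE inordK // ltnS (leq_trans (max_card _)) ?card_ord.
Qed.

Lemma out_coefE U m : out_coef U i m = \sum_(f | occupation f == m) amplitude U f.
Proof.
apply: eq_bigl => f; apply/forallP/eqP => [occ_f | <- lk]; last by rewrite occupationE.
by apply/ffunP => lk; apply/val_inj; rewrite /= occupationE; apply/eqP.
Qed.

Lemma fock_probE U m : fock_prob U i m =
  \sum_(f | occupation f == m) \sum_(g | occupation g == m)
     amplitude U f * (amplitude U g)^* * (\prod_lk (m lk)`!)%:R.
Proof.
rewrite /fock_prob normCK out_coefE rmorph_sum big_distrlr /= mulr_suml.
by apply: eq_bigr => f _; rewrite mulr_suml.
Qed.

Lemma valid_pattern_occupation f :
  valid_pattern (pattern (occupation f)) = ((\sum_j f j) %% n == 0)%N.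
Proof.
have pattern_f l : pattern (occupation f) l = (\sum_(j | f j == l) 1)%N.
  rewrite /pattern (partition_big i predT) //=; apply: eq_bigr => k _.
  by rewrite occupationE /occ -sum1_card; apply: eq_bigl => j; rewrite !inE.
rewrite /valid_pattern; congr (_ %% _ == _)%N.
rewrite [RHS](partition_big f predT) //=; apply: eq_bigr => l _.
by rewrite pattern_f big_distrr /= muln1; apply: eq_bigr => j /eqP ->.
Qed.

Lemma fiber_size_occupation f lk :
  fiber_size [set: 'I_n] (fun j => (f j, i j)) lk = occupation f lk.
Proof.
rewrite occupationE; apply: eq_card => j; rewrite !inE.
by case: lk => l k; rewrite xpair_eqE.
Qed.

Lemma card_label_preserving_comp f g :
  #|[pred s | label_preserving s && (g == comp_perm f s)]| =
  if occupation g == occupation f then (\prod_lk (occupation f lk)`!)%N else 0.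
Proof.
rewrite (eq_card (B := rearrangements [set: 'I_n] (fun j => (f j, i j))
                                     (fun j => (g j, i j)))) => [|s]; last first.
  have s_on : perm_on [set: 'I_n] s by apply/subsetP => x; rewrite inE.
  rewrite /rearrangements /label_preserving /comp_perm !inE s_on /=.
  apply/andP/forall_inP => [[/forallP s_i /eqP ->] j _ | fs_g].
    by rewrite ffunE xpair_eqE eqxx s_i.
  split; first by apply/forallP => j; have /andP[] := fs_g j (in_setT j).
  by apply/eqP/ffunP => j; rewrite ffunE; have /andP[/eqP] := fs_g j (in_setT j).
rewrite card_rearrangements.
have -> : [forall lk, fiber_size [set: 'I_n] (fun j => (f j, i j)) lk ==
                      fiber_size [set: 'I_n] (fun j => (g j, i j)) lk] =
          (occupation g == occupation f).
  apply/forallP/eqP => [fib_eq | occ_eq lk].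
    apply/ffunP => lk; apply/val_inj; rewrite /= -!fiber_size_occupation.
    by apply/esym/eqP.
  by rewrite !fiber_size_occupation occ_eq.
by case: eqP => // _; apply: eq_bigr => lk _; rewrite fiber_size_occupation.
Qed.

Lemma sum_label_preserving_comp (V : nmodType) (h : {ffun 'I_n -> 'I_n} -> V) f :
  \sum_(s | label_preserving s) h (comp_perm f s) =
  \sum_(g | occupation g == occupation f) h g *+ \prod_lk (occupation f lk)`!.
Proof.
rewrite [LHS](eq_bigr (fun s => \sum_(g | g == comp_perm f s) h g)) => [|s _];
  last by rewrite big_pred1_eq.
rewrite (exchange_big_dep predT) //= [RHS]big_mkcond; apply: eq_bigr => g _.
by rewrite sumr_const card_label_preserving_comp; case: eqP.
Qed.

Lemma prob_valid_perm_sum U : prob_valid U i =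
  \sum_(f : {ffun 'I_n -> 'I_n} | ((\sum_j f j) %% n == 0)%N)
    \sum_(s | label_preserving s) amplitude U f * (amplitude U (comp_perm f s))^*.
Proof.
rewrite /prob_valid (eq_bigr _ (fun m _ => fock_probE U m)).
rewrite (exchange_big_dep (fun f => (\sum_j f j) %% n == 0)%N) /=; last first.
  by move=> m f valid_m /eqP occ_f; rewrite -valid_pattern_occupation occ_f.
apply: eq_bigr => f valid_f.
rewrite (big_pred1 (occupation f)) => [|m]; last first.
  rewrite /pred1 /= [m == _]eq_sym.
  by case: eqP => [<- | _]; rewrite ?andbT ?andbF ?valid_pattern_occupation.
rewrite (sum_label_preserving_comp (fun g => amplitude U f * (amplitude U g)^*)).
by apply: eq_bigr => g _; rewrite mulr_natr.
Qed.

End PhotonPaths.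

Lemma prodr_nat_bool (C : comPzSemiRingType) (I : finType) (b : pred I) :
  \prod_j ((b j)%:R : C) = [forall j, b j]%:R.
Proof.
have [/forallP b_all | /forallPn[j /negbTE bj]] := boolP [forall j, b j].
  by rewrite big1 // => j _; rewrite b_all.
by rewrite (bigD1 j) //= bj mul0r.
Qed.

Section FourierInterferometer.
Variables (R : realType) (n : nat).
Hypothesis n_gt0 : (0 < n)%N.
Local Notation w := (omega R n).
Local Notation U := (fourierU R n).
Let w_prim : n.-primitive_root w := omega_prim R n_gt0.

Lemma fourierU_mul_conj (l j j' : 'I_n) :
  U l j * (U l j')^* = n%:R^-1 * (w ^+ j' / w ^+ j) ^+ l.
Proof.
set c : R[i] := ((Num.sqrt (n%:R : R))^-1)%:C%C.
have conj_c : c^* = c := conjc_real _.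
have c2 : c * c = n%:R^-1.
  by rewrite -rmorphM -invfM -expr2 sqr_sqrtr ?ler0n // fmorphV rmorph_nat.
rewrite /fourierU -/c rmorphM /= conj_c fmorphV rmorphXn /= conjC_omega exprVn invrK.
by rewrite exprMn exprVn -!exprM -c2; ring.
Qed.

Lemma sum_fourier_twisted (t : nat) (j j' : 'I_n) :
  \sum_(l < n) w ^+ (l * t) * (U l j * (U l j')^*) =
  ((t + j') %% n == j %% n)%N%:R.
Proof.
pose x := w ^+ (t + j') / w ^+ j.
have x_unity : x ^+ n = 1.
  rewrite /x exprMn exprVn -!exprM !(mulnC _ n) !exprM (prim_expr_order w_prim).
  by rewrite !expr1n invr1 mulr1.
rewrite (eq_bigr (fun l : 'I_n => n%:R^-1 * x ^+ l)) => [|l _]; last first.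
  rewrite fourierU_mul_conj /x !exprMn !exprVn -!exprM mulnDl exprD (mulnC l t).
  by ring.
have wj_neq0 : w ^+ j != 0.
  by rewrite expf_neq0 // (prim_root_eq0 w_prim) -lt0n.
rewrite -mulr_sumr sum_expr_unity // /x -(inj_eq (mulIf wj_neq0)) divfK // mul1r.
rewrite (eq_prim_root_expr w_prim).
by case: eqP => _; rewrite ?mulr0 // mulVf // pnatr_eq0 -lt0n.
Qed.

Lemma sum_amplitude_twisted (s : {perm 'I_n}) (t : nat) :
  \sum_(f : {ffun 'I_n -> 'I_n}) (w ^+ (\sum_j f j)) ^+ t *
     (amplitude U f * (amplitude U (comp_perm f s))^*) =
  \prod_(j < n) ((t + (s^-1)%g j) %% n == j %% n)%N%:R.
Proof.
rewrite [RHS](eq_bigr (fun j =>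
    \sum_(l < n) w ^+ (l * t) * (U l j * (U l ((s^-1)%g j))^*))) => [|j _];
  last by rewrite sum_fourier_twisted.
rewrite bigA_distr_bigA /=; apply: eq_bigr => f _.
have amplitude_comp : (amplitude U (comp_perm f s))^* =
                      \prod_j (U (f j) ((s^-1)%g j))^*.
  rewrite rmorph_prod (reindex_perm (s^-1)%g) /=.
  by apply: eq_bigr => j _; rewrite ffunE permKV.
rewrite amplitude_comp -exprM big_distrl -prodrXr -!big_split /=.
by apply: eq_bigr => j _; rewrite mulrA.
Qed.

End FourierInterferometer.

Lemma label_preserving_rotation n (K : finType) (i : 'I_n -> K) (r : 'I_n)
    (s : {perm 'I_n}) (t : 'I_n) :
  (forall j, j != r -> i r != i j) -> label_preserving i s ->
  [forall j, (t + (s^-1)%g j) %% n == j %% n]%N = (s == 1%g) && (t == 0 :> nat).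
Proof.
move=> r_unique /forallP s_lp.
apply/forallP/andP => [rot | [/eqP -> /eqP ->] j]; last by rewrite invg1 perm1.
have s_r : (s^-1)%g r = r.
  apply/eqP; apply: contraT => /r_unique.
  by move/eqP: (s_lp ((s^-1)%g r)); rewrite permKV => ->; rewrite eqxx.
have t0 : t = 0 :> nat.
  apply/eqP; move: (rot r).
  by rewrite s_r -{2}[val r]add0n eqn_modDr mod0n modn_small.
split; last by rewrite t0.
suff s_inv1 : (s^-1)%g = 1%g by rewrite -[s]invgK s_inv1 invg1.
apply/permP => j; rewrite perm1; apply/val_inj/eqP.
by move: (rot j); rewrite t0 add0n !modn_small.
Qed.

Theorem theorem5 (R : realType) (n : nat) (K : finType) (i : 'I_n -> K) :
  (exists r : 'I_n, forall j : 'I_n, j != r -> basis_ip R K (i r) (i j) = 0) ->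
  prob_valid (fourierU R n) i = (n%:R)^-1.
Proof.
case=> r r_orth.
have r_unique j : j != r -> i r != i j.
  move=> /r_orth; apply: contra_eq_neq => ->.
  by rewrite /basis_ip eqxx oner_neq0.
have n_gt0 : (0 < n)%N := leq_ltn_trans (leq0n r) (ltn_ord r).
have nR_neq0 : n%:R != 0 :> R[i] by rewrite pnatr_eq0 -lt0n.
rewrite prob_valid_perm_sum (sum_mod_eq0_prim_root _ _ (omega_prim R n_gt0) nR_neq0).
rewrite -[RHS]mulr1; congr (_ * _).
transitivity (\sum_(t < n) \sum_(s | label_preserving i s)
                ((s == 1%g) && (t == 0 :> nat))%:R : R[i]).
  apply: eq_bigr => t _; under eq_bigr => f _ do rewrite mulr_sumr.
  rewrite exchange_big /=.
  apply: eq_bigr => s s_lp; rewrite sum_amplitude_twisted // prodr_nat_bool.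
  by rewrite (label_preserving_rotation _ r_unique s_lp).
rewrite (bigD1 (Ordinal n_gt0)) //= [X in _ + X]big1 => [|t t_neq0]; last first.
  rewrite -val_eqE /= in t_neq0.
  by rewrite big1 // => s _; rewrite (negbTE t_neq0) andbF.
rewrite addr0 (bigD1 1%g) /=; last by apply/forallP => j; rewrite perm1.
by rewrite eqxx big1 ?addr0 // => s /andP[_ /negbTE ->].
Qed.
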